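(* Let $W$ be a skew-symmetric weighing matrix of order $n\equiv 0\pmod 4$ and weight $m\equiv 3\pmod 8$, i.e. an $n\times n$ matrix with entries in $\{0,1,-1\}$ satisfying $W^T=-W$ and $WW^T=mI$. Let $\tilde{C}_4(W)$ be the $\mathbb{Z}_4$-code of length $2n$ with generator matrix $(I\ \ W+2I)$, entries read modulo $4$. Let $a,b,c,d$ be integers with $c\equiv 2a+b\pmod 4$ and $d\equiv a+2b\pmod 4$. Then $\tilde{C}_4(W)$ is a Type~II $\mathbb{Z}_4$-code, $A_4(\tilde{C}_4(W))$ is an even unimodular lattice, and the $2n$ rows of the matrix \[ \tilde{F}(W)=\frac{1}{2}\begin{pmatrix} aI+bW & cI+dW\\ -cI+dW & aI-bW\end{pmatrix} \] form a $\frac{1}{4}(a^2+mb^2+c^2+md^2)$-frame of $A_4(\tilde{C}_4(W))$.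
   Context: A $\mathbb{Z}_k$-code of length $N$ is a $\mathbb{Z}_k$-submodule of $\mathbb{Z}_k^N$. A Type~II $\mathbb{Z}_4$-code is a self-dual $\mathbb{Z}_4$-code (equal to its dual under the standard inner product) all of whose codewords have Euclidean weight divisible by $8$, where the Euclidean weight of $x$ is $n_1(x)+4n_2(x)$, with $n_1(x)$ the number of coordinates equal to $\pm1$ and $n_2(x)$ the number equal to $2$. Construction A: with $\rho:\mathbb{Z}_k\to\mathbb{Z}$ sending $0,1,\dots,k-1$ to $0,1,\dots,k-1$, for a $\mathbb{Z}_k$-code $C$ of length $N$ set $A_k(C)=\frac{1}{\sqrt{k}}\{\rho(C)+k\mathbb{Z}^N\}$. For a lattice $L$ in dimension $N$, a set $\{f_1,\dots,f_N\}$ of vectors of $L$ with $(f_i,f_j)=t\,\delta_{i,j}$ is called a $t$-frame of $L$. A lattice $L$ is even unimodular if it equals its dual and all norms $(x,x)$, $x\in L$, are even. *)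

From HB Require Import structures.
From mathcomp Require Import all_boot all_order all_algebra.
From mathcomp Require Import reals.
Set Implicit Arguments. Unset Strict Implicit. Unset Printing Implicit Defensive.
Import Order.TTheory GRing.Theory Num.Theory.
Local Open Scope ring_scope.

Definition code_gen (k r N : nat) (G : 'M['Z_k]_(r, N)) : {set 'rV['Z_k]_N} :=
  [set u *m G | u : 'rV['Z_k]_r].

Definition zdot (k N : nat) (x y : 'rV['Z_k]_N) : 'Z_k := (x *m y^T) 0 0.

Definition dual_code (k N : nat) (C : {set 'rV['Z_k]_N}) : {set 'rV['Z_k]_N} :=
  [set x | [forall y in C, zdot x y == 0]].

Definition self_dual (k N : nat) (C : {set 'rV['Z_k]_N}) : Prop :=
  C = dual_code C.

Definition n1 (N : nat) (x : 'rV['Z_4]_N) : nat :=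
  #|[set i : 'I_N | (x 0 i == 1) || (x 0 i == -1)]|.
Definition n2 (N : nat) (x : 'rV['Z_4]_N) : nat :=
  #|[set i : 'I_N | x 0 i == 2%:R]|.
Definition euclid_weight (N : nat) (x : 'rV['Z_4]_N) : nat :=
  (n1 x + 4 * n2 x)%N.

Definition typeII_Z4 (N : nat) (C : {set 'rV['Z_4]_N}) : Prop :=
  self_dual C /\ forall x, x \in C -> (8 %| euclid_weight x)%N.

Section Lattices.
Variable R : realType.

Definition rho (k : nat) (x : 'Z_k) : int := (nat_of_ord x)%:Z.

Definition Ak (k N : nat) (C : {set 'rV['Z_k]_N}) : 'rV[R]_N -> Prop :=
  fun v => exists2 c, c \in C &
    exists z : 'rV[int]_N,
      v = (Num.sqrt (k%:R : R))^-1 *: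
            map_mx (fun t : int => t%:~R : R) (map_mx (@rho k) c + k%:Z *: z).

Definition rdot (N : nat) (x y : 'rV[R]_N) : R := (x *m y^T) 0 0.

Definition dual_lattice (N : nat) (L : 'rV[R]_N -> Prop) : 'rV[R]_N -> Prop :=
  fun y => forall x, L x -> exists z : int, rdot x y = z%:~R.

Definition unimodular (N : nat) (L : 'rV[R]_N -> Prop) : Prop :=
  forall y, L y <-> dual_lattice L y.

Definition even_lattice (N : nat) (L : 'rV[R]_N -> Prop) : Prop :=
  forall x, L x -> exists z : int, rdot x x = (2 * z)%:~R.

Definition even_unimodular (N : nat) (L : 'rV[R]_N -> Prop) : Prop :=
  even_lattice L /\ unimodular L.

Definition is_frame (N : nat) (L : 'rV[R]_N -> Prop) (t : R)
    (f : 'I_N -> 'rV[R]_N) : Prop :=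
  (forall i, L (f i)) /\
  (forall i j, rdot (f i) (f j) = if i == j then t else 0).

End Lattices.
Arguments Ak R {k N} C _.

Definition skew_weighing (n m : nat) (W : 'M[int]_n) : Prop :=
  [/\ forall i j, W i j \in [:: 0; 1; -1],
      W^T = - W &
      W *m W^T = (m%:Z)%:M].

Definition gen_C4 (n : nat) (W : 'M[int]_n) : 'M['Z_4]_(n, n + n) :=
  map_mx (fun t : int => t%:~R : 'Z_4) (row_mx 1%:M (W + 2%:M)).

Definition C4t (n : nat) (W : 'M[int]_n) : {set 'rV['Z_4]_(n + n)} :=
  code_gen (gen_C4 W).

Definition Ft (R : realType) (n : nat) (W : 'M[int]_n) (a b c d : int)
    : 'M[R]_(n + n) :=
  let Wr := map_mx (fun t : int => t%:~R : R) W in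
  (2%:R : R)^-1 *:
    block_mx (a%:~R *: 1%:M + b%:~R *: Wr) (c%:~R *: 1%:M + d%:~R *: Wr)
             (- (c%:~R *: 1%:M) + d%:~R *: Wr) (a%:~R *: 1%:M - b%:~R *: Wr).
Arguments Ft R {n} W a b c d.

From HB Require Import structures.
From mathcomp Require Import all_boot all_order all_algebra.
From mathcomp Require Import reals zify ring.
Set Implicit Arguments. Unset Strict Implicit. Unset Printing Implicit Defensive.
Import Order.TTheory GRing.Theory Num.Theory.
Local Open Scope ring_scope.

(* Since W is skew with W W^T = m I, the matrices x I + y W commute and
   multiply like x + y sqrt(-m).  Hence G = (I | W + 2I) has G G^T = (m+5) I,
   and the integer matrix B with F~(W) = B / 2 has
   B B^T = (a^2 + m b^2 + c^2 + m d^2) I.  Modulo 4 we have m = -1, so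
   (W + 2I)(W + 2I)^T = -I, which makes the code generated by (I | W + 2I)
   self-dual, and the congruences on c and d give B = (aI+bW ; -cI+dW) G, so
   the rows of B reduce into the code.  The Euclidean weight of a Z_4-vector
   is congruent mod 8 to the norm of any integer lift, and a lift u G has norm
   (m+5) u u^T = 0 (mod 8).  Finally, A_4 of any Type II code is even
   unimodular, since A_4(C) consists of the halves of the integer vectors
   reducing into C. *)

Section SkewWeighingAlgebra.
Variables (R : comPzRingType) (n : nat) (m : R) (W : 'M[R]_n).
Hypotheses (W_skew : W^T = - W) (W_gram : W *m W^T = m%:M).

Definition combW (x y : R) : 'M[R]_n := x%:M + y *: W.

Lemma mulmx_skew_sqr : W *m W = - m%:M.
Proof. by apply/eqP; rewrite -eqr_oppLR -mulmxN -W_skew W_gram. Qed.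

Lemma combW_tr x y : (combW x y)^T = combW x (- y).
Proof. by rewrite linearD /= linearZ /= W_skew tr_scalar_mx scalerN -scaleNr. Qed.

Lemma combW_mul x y x' y' :
  combW x y *m combW x' y' = combW (x * x' - m * y * y') (x * y' + y * x').
Proof.
rewrite mulmxDl !mulmxDr !mul_scalar_mx -!scalemxAl mul_mx_scalar -scalemxAr.
rewrite mulmx_skew_sqr; apply/matrixP => i j; rewrite !mxE.
by case: (i == j); rewrite /= ?mulr1n ?mulr0n; ring.
Qed.

Lemma combW_add x y x' y' : combW x y + combW x' y' = combW (x + x') (y + y').
Proof. by rewrite /combW scalerDl raddfD addrACA. Qed.

Lemma combW_scalar x : combW x 0 = x%:M.
Proof. by rewrite /combW scale0r addr0. Qed.

Definition frame_mx (a b c d : R) : 'M[R]_(n + n) :=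
  block_mx (combW a b) (combW c d) (combW (- c) d) (combW a (- b)).

Lemma frame_mx_gram a b c d :
  frame_mx a b c d *m (frame_mx a b c d)^T
  = (a ^+ 2 + m * b ^+ 2 + c ^+ 2 + m * d ^+ 2)%:M.
Proof.
rewrite tr_block_mx mulmx_block !combW_tr !combW_mul !combW_add.
have zero_combW : 0 = combW 0 0 by rewrite combW_scalar (raddf0 (@scalar_mx _ n)).
rewrite (scalar_mx_block n n) zero_combW -!combW_scalar.
by congr block_mx; congr combW; ring.
Qed.

Definition gen_mx : 'M[R]_(n, n + n) := row_mx 1%:M (W + 2%:M).

Lemma combW_gen : combW 2 1 = W + 2%:M.
Proof. by rewrite /combW scale1r addrC. Qed.

Lemma gen_mx_gram : gen_mx *m gen_mx^T = (m + 5)%:M.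
Proof.
rewrite tr_row_mx mul_row_col trmx1 mul1mx -combW_gen combW_tr combW_mul.
by rewrite -[1%:M]combW_scalar combW_add -combW_scalar; congr combW; ring.
Qed.

Lemma frame_mx_gen a b c d : m = -1 -> 4 = 0 :> R ->
  c = 2 * a + b -> d = a + 2 * b ->
  frame_mx a b c d = col_mx (combW a b) (combW (- c) d) *m gen_mx.
Proof.
move=> m_eq four_eq0 -> ->.
rewrite mul_col_mx !mul_mx_row !mulmx1 -combW_gen !combW_mul m_eq /frame_mx block_mxEv.
congr (col_mx (row_mx _ (combW _ _)) (row_mx _ (combW _ _))); try ring.
- by apply/subr0_eq; rewrite -(mulr0 a) -four_eq0; ring.
- by apply/subr0_eq; rewrite -(mulr0 (- b)) -four_eq0; ring.
Qed.

End SkewWeighingAlgebra.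

Section MapSkewWeighing.
Variables (R S : comPzRingType) (f : {rmorphism R -> S}) (n : nat) (W : 'M[R]_n).

Lemma map_combW x y : map_mx f (combW W x y) = combW (map_mx f W) (f x) (f y).
Proof. by rewrite map_mxD map_scalar_mx map_mxZ. Qed.

Lemma map_frame_mx a b c d :
  map_mx f (frame_mx W a b c d) = frame_mx (map_mx f W) (f a) (f b) (f c) (f d).
Proof. by rewrite map_block_mx !map_combW !rmorphN. Qed.

Lemma map_gen_mx : map_mx f (gen_mx W) = gen_mx (map_mx f W).
Proof. by rewrite map_row_mx map_mxD map_mx1 map_scalar_mx rmorph_nat. Qed.

Lemma map_skew_weighing m : W^T = - W -> W *m W^T = m%:M ->
  (map_mx f W)^T = - map_mx f W /\ map_mx f W *m (map_mx f W)^T = (f m)%:M.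
Proof.
move=> W_skew W_gram.
by rewrite map_trmx -map_mxM W_gram map_scalar_mx W_skew map_mxN.
Qed.

End MapSkewWeighing.

Section ZpCodes.
Variable k : nat.

Lemma natr_Zp_eq0 (t : nat) : (1 < k)%N -> (t%:R == 0 :> 'Z_k) = (k %| t)%N.
Proof. by move=> k_gt1; rewrite Zp_nat -(inj_eq val_inj) /= Zp_cast. Qed.

Lemma intr_Zp_eq0 (t : int) : (1 < k)%N -> (t%:~R == 0 :> 'Z_k) = (k %| t)%Z.
Proof.
move=> k_gt1; case: t => [t | t]; last rewrite NegzE mulrNz oppr_eq0 rpredN.
all: by rewrite -pmulrn natr_Zp_eq0.
Qed.

Lemma intr_Zp_eqmod (s t : int) : (1 < k)%N ->
  (s = t %[mod k])%Z -> s%:~R = t%:~R :> 'Z_k.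
Proof.
move=> k_gt1 /eqP; rewrite eqz_mod_dvd -intr_Zp_eq0 // rmorphB subr_eq0.
by move/eqP.
Qed.

Lemma rhoK (x : 'Z_k) : (rho x)%:~R = x.
Proof. by rewrite /rho -pmulrn natr_Zp. Qed.

Lemma map_rhoK p q (A : 'M['Z_k]_(p, q)) : map_mx intr (map_mx (@rho k) A) = A.
Proof. by apply/matrixP => i j; rewrite !mxE rhoK. Qed.

Lemma zdot_row r N (x : 'rV['Z_k]_N) (G : 'M['Z_k]_(r, N)) i :
  zdot x (row i G) = (x *m G^T) 0 i.
Proof. by rewrite /zdot !mxE; apply: eq_bigr => j _; rewrite !mxE. Qed.

Lemma code_gen_row r N (G : 'M['Z_k]_(r, N)) i : row i G \in code_gen G.
Proof. by rewrite rowE; apply: imset_f. Qed.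

Lemma code_gen_self_dual n (A : 'M['Z_k]_n) :
  A *m A^T = - 1%:M -> self_dual (code_gen (row_mx 1%:M A)).
Proof.
move=> AAt; set G := row_mx 1%:M A.
have GGt : G *m G^T = 0 by rewrite tr_row_mx mul_row_col trmx1 mul1mx AAt addrN.
have AtA : A^T *m A = - 1%:M.
  by apply/eqP; rewrite -eqr_oppLR -mulNmx; apply/eqP/mulmx1C; rewrite mulmxN AAt opprK.
apply/setP => x; rewrite inE; apply/imsetP/forall_inP => [[u _ ->] y | x_orth].
  by case/imsetP => v _ ->; rewrite /zdot trmx_mul !mulmxA -(mulmxA u) GGt mulmx0 mul0mx mxE.
have xGt : x *m G^T = 0.
  by apply/rowP => i; rewrite -zdot_row mxE; apply/eqP/x_orth/code_gen_row.
exists (lsubmx x) => //.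
rewrite -[x]hsubmxK in xGt *; rewrite row_mxKl.
move: xGt; rewrite tr_row_mx mul_row_col trmx1 mulmx1 => /eqP.
rewrite addr_eq0 => /eqP x1E; rewrite mul_mx_row mulmx1; congr row_mx.
by rewrite x1E mulNmx -mulmxA AtA mulmxN mulmx1 opprK.
Qed.

End ZpCodes.

Definition euclid_weight_Z4 (x : 'Z_4) : nat :=
  ((x == 1) || (x == -1)) + 4 * (x == 2%:R).

Lemma euclid_weightE N (x : 'rV['Z_4]_N) :
  euclid_weight x = (\sum_i euclid_weight_Z4 (x 0%R i))%N.
Proof.
have card_sum (P : pred 'I_N) : #|[set i | P i]| = (\sum_i P i)%N.
  by rewrite -sum1_card big_mkcond /=; apply: eq_bigr => i _; rewrite inE; case: (P i).
by rewrite /euclid_weight /n1 /n2 !card_sum big_split /= big_distrr.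
Qed.

Lemma euclid_weight_Z4_sqr (t : int) :
  ((euclid_weight_Z4 t%:~R)%:Z = t ^+ 2 %[mod 8])%Z.
Proof.
have [q [r [-> r_cases]]] : exists q r, t = q * 4 + r /\ (r = 0 \/ r = 1 \/ r = 2 \/ r = 3).
  by exists (t %/ 4)%Z, (t %% 4)%Z; lia.
rewrite (@intr_Zp_eqmod 4 _ r) ?modzMDl //.
by case: r_cases => [|[|[|]]] ->; rewrite /euclid_weight_Z4 /=; lia.
Qed.

Lemma euclid_weight_intr N (w : 'rV[int]_N) :
  ((euclid_weight (map_mx intr w))%:Z = (w *m w^T) 0%R 0%R %[mod 8])%Z.
Proof.
apply/eqP; rewrite eqz_mod_dvd euclid_weightE -natz natr_sum mxE -sumrB.
apply: rpred_sum => i _; rewrite !mxE natz -expr2 -eqz_mod_dvd.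
exact/eqP/euclid_weight_Z4_sqr.
Qed.

Section TypeIICode.
Variables (n m : nat) (W : 'M[int]_n).
Hypotheses (m_mod8 : (m %% 8 = 3)%N) (W_skew : W^T = - W)
  (W_gram : W *m W^T = (m%:Z)%:M).

Lemma natr_Z4_eqN1 : m%:R = -1 :> 'Z_4.
Proof. by apply/eqP; rewrite -subr_eq0 opprK natr1 natr_Zp_eq0 //; lia. Qed.

Lemma C4tE : C4t W = code_gen (gen_mx (map_mx intr W)).
Proof. by rewrite /C4t /gen_C4 -map_gen_mx. Qed.

Lemma C4t_self_dual : self_dual (C4t W).
Proof.
have [W4_skew W4_gram] := map_skew_weighing (intr : int -> 'Z_4) W_skew W_gram.
rewrite C4tE; apply: code_gen_self_dual.
rewrite -combW_gen (combW_tr W4_skew) (combW_mul W4_skew W4_gram).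
rewrite -(raddfN (@scalar_mx _ n)) /= -(combW_scalar (map_mx intr W)); congr combW.
- by rewrite -pmulrn natr_Z4_eqN1; apply/eqP.
- by apply/eqP.
Qed.

Lemma C4t_euclid_weight x : x \in C4t W -> (8 %| euclid_weight x)%N.
Proof.
case/imsetP => u _ ->; set w := map_mx (@rho 4) u *m gen_mx W.
have -> : u *m gen_C4 W = map_mx intr w by rewrite map_mxM map_rhoK.
have norm8 : (8 %| (w *m w^T) 0%R 0%R)%Z.
  rewrite trmx_mul mulmxA -(mulmxA _ (gen_mx W)) (gen_mx_gram W_skew W_gram).
  rewrite mul_mx_scalar -scalemxAl mxE dvdz_mulr //.
  by have : (8 %| m + 5)%N by lia.
by have /eqP := euclid_weight_intr w; rewrite eqz_mod_dvd (rpredBr _ norm8).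
Qed.

Lemma C4t_typeII : typeII_Z4 (C4t W).
Proof. by split; [exact: C4t_self_dual | exact: C4t_euclid_weight]. Qed.

End TypeIICode.

Lemma row_dotC (S : comPzRingType) N (x y : 'rV[S]_N) :
  (x *m y^T) 0 0 = (y *m x^T) 0 0.
Proof. by rewrite -[x *m _]trmxK trmx_mul trmxK mxE. Qed.

Section ConstructionA4.
Variables (R : realType) (N : nat) (C : {set 'rV['Z_4]_N}).

Lemma sqrt4 : Num.sqrt (4%:R : R) = 2.
Proof. by rewrite (_ : 4%:R = 2 ^+ 2) ?sqrtr_sqr ?ger0_norm // expr2 -natrM. Qed.

Lemma Ak4E v : Ak R C v <->
  exists2 w : 'rV[int]_N, map_mx intr w \in C & v = 2^-1 *: map_mx intr w.
Proof.
split=> [[c cC [z ->]] | [w wC ->]].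
  exists (map_mx (@rho 4) c + 4%:Z *: z); last by rewrite sqrt4.
  have four0 : (4%:~R : 'Z_4) = 0 by apply/eqP.
  by rewrite map_mxD map_rhoK map_mxZ /= four0 scale0r addr0.
exists (map_mx intr w) => //.
exists (\matrix_(i, j) ((w i j - rho ((w i j)%:~R : 'Z_4)) %/ 4)%Z).
rewrite sqrt4; congr (_ *: _); apply/matrixP => i j; rewrite !mxE.
rewrite [4%Z * _]mulrC divzK; first by rewrite addrC subrK.
by rewrite -intr_Zp_eq0 // rmorphB /= rhoK subrr.
Qed.

Lemma rdot_half (w w' : 'rV[int]_N) :
  rdot (2^-1 *: map_mx intr w) (2^-1 *: map_mx intr w')
  = ((w *m w'^T) 0 0)%:~R / 4 :> R.
Proof.
rewrite /rdot -scalemxAl linearZ /= -scalemxAr scalerA map_trmx -map_mxM !mxE.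
by rewrite -invfM -natrM mulrC.
Qed.

Lemma zdot_intr (w w' : 'rV[int]_N) :
  zdot (map_mx intr w) (map_mx intr w') = ((w *m w'^T) 0 0)%:~R :> 'Z_4.
Proof. by rewrite /zdot map_trmx -map_mxM mxE. Qed.

Lemma typeII_Ak_even : typeII_Z4 C -> even_lattice (Ak R C).
Proof.
move=> [_ C_weight] x /Ak4E [w wC ->].
have weight8 : (8 %| (euclid_weight (map_mx intr w))%:Z)%Z := C_weight _ wC.
have /eqP := euclid_weight_intr w; rewrite eqz_mod_dvd (rpredBl _ weight8).
case/dvdzP => q wwE; exists q.
by rewrite rdot_half wwE !rmorphM /= -!pmulrn; field.
Qed.

Lemma self_dual_Ak_unimodular : self_dual C -> unimodular (Ak R C).
Proof.
move=> C_self_dual y; split=> [/Ak4E [w' w'C ->] x /Ak4E [w wC ->] | y_dual].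
  have : map_mx intr w \in dual_code C by rewrite -C_self_dual.
  rewrite inE => /forall_inP /(_ _ w'C).
  rewrite zdot_intr intr_Zp_eq0 // => /dvdzP [q wwE].
  by exists q; rewrite rdot_half wwE rmorphM /= -pmulrn; field.
have half_int i : exists q : int, y 0 i = q%:~R / 2.
  have /y_dual [q yE] : Ak R C (2^-1 *: map_mx intr (4%:Z *: delta_mx 0 i)).
    apply/Ak4E; exists (4%:Z *: delta_mx 0 i) => //.
    rewrite map_mxZ /= (_ : 4%:~R = 0 :> 'Z_4); last by apply/eqP.
    by rewrite scale0r C_self_dual inE; apply/forall_inP => c _; rewrite /zdot mul0mx mxE.
  exists q; rewrite -yE /rdot map_mxZ map_delta_mx scalerA -!scalemxAl -rowE !mxE /=.
  by rewrite -pmulrn; field.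
have [kf kfE] := fin_all_exists half_int.
have yE : y = 2^-1 *: map_mx intr (\row_i kf i).
  by apply/rowP => i; rewrite !mxE kfE mulrC.
apply/Ak4E; exists (\row_i kf i) => //.
rewrite C_self_dual inE; apply/forall_inP => c cC.
have /y_dual [q] : Ak R C (2^-1 *: map_mx intr (map_mx (@rho 4) c)).
  by apply/Ak4E; exists (map_mx (@rho 4) c); rewrite ?map_rhoK.
rewrite yE rdot_half => kcE.
rewrite -[c]map_rhoK zdot_intr row_dotC intr_Zp_eq0 //; apply/dvdzP; exists q.
by apply: (@intr_inj R); rewrite rmorphM /= -kcE -pmulrn divfK // pnatr_eq0.
Qed.

Lemma typeII_Ak_even_unimodular : typeII_Z4 C -> even_unimodular (Ak R C).
Proof.
move=> C_typeII; split; first exact: typeII_Ak_even.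
by apply: self_dual_Ak_unimodular; case: C_typeII.
Qed.

End ConstructionA4.

Lemma rdot_row (R : realType) p N (M : 'M[R]_(p, N)) i j :
  rdot (row i M) (row j M) = (M *m M^T) i j.
Proof. by rewrite /rdot !mxE; apply: eq_bigr => l _; rewrite !mxE. Qed.

Section Frame.
Variables (R : realType) (n m : nat) (W : 'M[int]_n) (a b c d : int).
Hypotheses (m_mod8 : (m %% 8 = 3)%N) (W_skew : W^T = - W)
  (W_gram : W *m W^T = (m%:Z)%:M).

Lemma FtE : Ft R W a b c d
  = 2^-1 *: frame_mx (map_mx intr W) a%:~R b%:~R c%:~R d%:~R.
Proof. by rewrite /Ft /frame_mx /combW -!scaleNr !scalemx1. Qed.

Hypotheses (c_mod4 : (c = 2 * a + b %[mod 4])%Z) (d_mod4 : (d = a + 2 * b %[mod 4])%Z).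

Lemma Ft_row_in_Ak i : Ak R (C4t W) (row i (Ft R W a b c d)).
Proof.
have [W4_skew W4_gram] := map_skew_weighing (intr : int -> 'Z_4) W_skew W_gram.
apply/Ak4E; exists (row i (frame_mx W a b c d)).
  rewrite map_row map_frame_mx C4tE (frame_mx_gen W4_skew W4_gram).
  - by rewrite row_mul; apply: imset_f.
  - by rewrite /= -pmulrn natr_Z4_eqN1.
  - by apply/eqP.
  - by rewrite /= (intr_Zp_eqmod _ c_mod4) // rmorphD rmorphM.
  - by rewrite /= (intr_Zp_eqmod _ d_mod4) // rmorphD rmorphM.
by rewrite FtE -(map_frame_mx (intr : int -> R)) linearZ map_row.
Qed.

Lemma Ft_frame : is_frame (Ak R (C4t W))
  (4%:R^-1 * (a%:~R ^+ 2 + m%:R * b%:~R ^+ 2 + c%:~R ^+ 2 + m%:R * d%:~R ^+ 2))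
  (fun i => row i (Ft R W a b c d)).
Proof.
split=> [|i j]; first exact: Ft_row_in_Ak.
have [Wr_skew Wr_gram] := map_skew_weighing (intr : int -> R) W_skew W_gram.
rewrite rdot_row FtE -scalemxAl linearZ /= -scalemxAr scalerA.
rewrite (frame_mx_gram Wr_skew Wr_gram) !mxE -invfM -natrM /= -pmulrn.
by case: (i == j); rewrite ?mulr1n ?mulr0n ?mulr0.
Qed.

End Frame.

Theorem proposition3p3 (R : realType) (n m : nat) (W : 'M[int]_n)
    (a b c d : int) :
  (n %% 4 = 0)%N -> (m %% 8 = 3)%N ->
  skew_weighing m W ->
  (c = 2 * a + b %[mod 4])%Z -> (d = a + 2 * b %[mod 4])%Z ->
  [/\ typeII_Z4 (C4t W),
      even_unimodular (Ak R (C4t W)) &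
      is_frame (Ak R (C4t W))
        (4%:R^-1 * (a%:~R ^+ 2 + m%:R * b%:~R ^+ 2 + c%:~R ^+ 2
                    + m%:R * d%:~R ^+ 2))
        (fun i => row i (Ft R W a b c d))].
Proof.
(* The argument does not use n = 0 (mod 4). *)
move=> _ m_mod8 [_ W_skew W_gram] c_mod4 d_mod4.
have C4t_II := C4t_typeII m_mod8 W_skew W_gram.
split; [exact: C4t_II | exact: typeII_Ak_even_unimodular | exact: Ft_frame].
Qed.
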